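(* Let $A\in\mathbb{R}^{m\times n}$, $E\in\mathbb{R}^{m\times m}$, $F\in\mathbb{R}^{n\times n}$ with $I_m+E$ and $I_n+F$ nonsingular, and let $b,\epsilon\in\mathbb{R}^m$. Set $\tilde A = (I_m+E)A(I_n+F) = A+\Delta A$ with $\Delta A = EA + AF + EAF$, and $\tilde b = b+\epsilon$. Assume the noiseless system $Ax=b$ is consistent and let $x_{\rm LS}=A^\dagger b$. Let $(x_k)_{k\ge0}$ be the iterates of the randomized Kaczmarz algorithm applied to $\tilde A x\approx\tilde b$, with starting point $x_0$ satisfying $x_0 - x_{\rm LS}\in\operatorname{range}(\tilde A^\top)$. Then for every $k\ge0$, $$\mathbb{E}\|x_k - x_{\rm LS}\|^2 \le \left(1-\frac{1}{\tilde R}\right)^k\|x_0 - x_{\rm LS}\|^2 + \frac{\|\Delta A\, x_{\rm LS} - \epsilon\|^2}{\sigma_{\min}^2(\tilde A)},$$ where $\tilde R = \|\tilde A^\dagger\|^2\,\|\tilde A\|_F^2$.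
   Context: Norms of vectors are Euclidean; $\|M\|$ is the spectral norm, $\|M\|_F$ the Frobenius norm, $M^\dagger$ the Moore–Penrose pseudoinverse, $\sigma_{\min}(M)$ the smallest nonzero singular value of $M$, and $I_m$ the $m\times m$ identity. The randomized Kaczmarz (RK) algorithm applied to a system $\tilde A x\approx \tilde b$ (with $\tilde A$ having nonzero rows $\tilde a_1^\top,\dots,\tilde a_m^\top$) generates, from a starting point $x_0$, the iterates $x_{k+1} = x_k - \frac{\tilde a_{i(k)}^\top x_k - \tilde b_{i(k)}}{\|\tilde a_{i(k)}\|^2}\tilde a_{i(k)}$, where the indices $i(k)$ are drawn independently with $\Pr[i(k)=i] = \|\tilde a_i\|^2/\|\tilde A\|_F^2$. The expectation is over these random indices. *)

From HB Require Import structures.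
From mathcomp Require Import all_boot all_order all_algebra.
From mathcomp Require Import boolp classical_sets reals.
Set Implicit Arguments. Unset Strict Implicit. Unset Printing Implicit Defensive.
Import Order.TTheory GRing.Theory Num.Theory.
Local Open Scope ring_scope.
Local Open Scope classical_set_scope.

Section Defs.
Variable R : realType.

Definition vnorm n (v : 'cV[R]_n) : R := Num.sqrt (\sum_i (v i 0) ^+ 2).

Definition frob m n (A : 'M[R]_(m, n)) : R :=
  Num.sqrt (\sum_i \sum_j (A i j) ^+ 2).

Definition specnorm m n (A : 'M[R]_(m, n)) : R :=
  sup [set vnorm (A *m x) | x in [set x : 'cV[R]_n | vnorm x = 1]].

Definition penrose m n (A : 'M[R]_(m, n)) (X : 'M[R]_(n, m)) : Prop :=
  [/\ A *m X *m A = A, X *m A *m X = X,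
      (A *m X)^T = A *m X & (X *m A)^T = X *m A].

Definition pinv m n (A : 'M[R]_(m, n)) : 'M[R]_(n, m) :=
  xget 0 [set X | penrose A X].

(* smallest nonzero singular value: singular values are the s >= 0 with
   s^2 an eigenvalue of A^T A *)
Definition sigma_min m n (A : 'M[R]_(m, n)) : R :=
  inf [set s : R | 0 < s /\ eigenvalue (A^T *m A) (s ^+ 2)].

Definition rk_step m n (At : 'M[R]_(m, n)) (bt : 'cV[R]_m)
    (x : 'cV[R]_n) (i : 'I_m) : 'cV[R]_n :=
  let a := (row i At)^T in
  x - (((row i At *m x) 0 0 - bt i 0) / (vnorm a) ^+ 2) *: a.

Definition rk_iter m n (At : 'M[R]_(m, n)) (bt : 'cV[R]_m)
    (x0 : 'cV[R]_n) (s : seq 'I_m) : 'cV[R]_n :=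
  foldl (rk_step At bt) x0 s.

Definition rk_prob m n (At : 'M[R]_(m, n)) (i : 'I_m) : R :=
  (vnorm (row i At)^T) ^+ 2 / (frob At) ^+ 2.

(* E || x_k - z ||^2 over the i.i.d. random indices i(0..k-1) *)
Definition rk_expect_sqdist m n (At : 'M[R]_(m, n)) (bt : 'cV[R]_m)
    (x0 z : 'cV[R]_n) (k : nat) : R :=
  \sum_(s : k.-tuple 'I_m)
     (\prod_(i <- s) rk_prob At i) * (vnorm (rk_iter At bt x0 s - z)) ^+ 2.

End Defs.

From HB Require Import structures.
From mathcomp Require Import all_boot all_order all_algebra.
From mathcomp Require Import boolp classical_sets reals.
From mathcomp.algebra_tactics Require Import ring lra.
Import Order.TTheory GRing.Theory Num.Theory.
Set Implicit Arguments. Unset Strict Implicit. Unset Printing Implicit Defensive.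
Local Open Scope ring_scope.

(* Let L = ||pinv At|| and c = L^-2.  Since P = pinv At *m At is the orthogonal
   projector onto range(At^T), c ||v||^2 <= ||At v||^2 on that range, and the
   error x_k - xLS stays in it.  One RK step satisfies, for any z,
     E ||x_{k+1} - z||^2 = ||x_k - z||^2
                           + (||bt - At z||^2 - ||At (x_k - z)||^2) / ||At||_F^2,
   so the error contracts by 1 - c / ||At||_F^2 up to a residual term whose
   geometric sum is at most ||bt - At z||^2 / c; for z = xLS the residual is
   eps - dA xLS because A xLS = b.
   Finally c = sigma_min(At)^2: every positive eigenvalue of At^T At is at least
   c, and c is one, for otherwise the positive semidefinite matrix
   At^T At - c P + (I - P) would be invertible, hence coercive, which would
   force L^2 < 1 / c. *)

Section MatrixNorms.
Variable R : realType.
Implicit Types (m n : nat).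

Definition vdot n (u v : 'cV[R]_n) : R := (u^T *m v) 0 0.

Lemma vdotE n (u v : 'cV[R]_n) : vdot u v = \sum_i u i 0 * v i 0.
Proof. by rewrite /vdot mxE; apply: eq_bigr => i _; rewrite mxE. Qed.

Lemma vdotC n (u v : 'cV[R]_n) : vdot u v = vdot v u.
Proof. by rewrite !vdotE; apply: eq_bigr => i _; rewrite mulrC. Qed.

Lemma vdotDl n (u w v : 'cV[R]_n) : vdot (u + w) v = vdot u v + vdot w v.
Proof. by rewrite /vdot linearD /= mulmxDl mxE. Qed.

Lemma vdotDr n (u w v : 'cV[R]_n) : vdot v (u + w) = vdot v u + vdot v w.
Proof. by rewrite /vdot mulmxDr mxE. Qed.

Lemma vdotZl n a (u v : 'cV[R]_n) : vdot (a *: u) v = a * vdot u v.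
Proof. by rewrite /vdot linearZ /= -scalemxAl mxE. Qed.

Lemma vdotZr n a (u v : 'cV[R]_n) : vdot v (a *: u) = a * vdot v u.
Proof. by rewrite /vdot -scalemxAr mxE. Qed.

Lemma vdotNl n (u v : 'cV[R]_n) : vdot (- u) v = - vdot u v.
Proof. by rewrite -scaleN1r vdotZl mulN1r. Qed.

Lemma vdotNr n (u v : 'cV[R]_n) : vdot v (- u) = - vdot v u.
Proof. by rewrite -scaleN1r vdotZr mulN1r. Qed.

Lemma vdotBl n (u w v : 'cV[R]_n) : vdot (u - w) v = vdot u v - vdot w v.
Proof. by rewrite vdotDl vdotNl. Qed.

Lemma vdotBr n (u w v : 'cV[R]_n) : vdot v (u - w) = vdot v u - vdot v w.
Proof. by rewrite vdotDr vdotNr. Qed.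

Lemma vdot0l n (v : 'cV[R]_n) : vdot 0 v = 0.
Proof. by rewrite /vdot trmx0 mul0mx mxE. Qed.

Lemma vdot_trmx m n (M : 'M[R]_(m, n)) u v : vdot u (M *m v) = vdot (M^T *m u) v.
Proof. by rewrite /vdot trmx_mul trmxK mulmxA. Qed.

Lemma vdot_gram m n (Y : 'M[R]_(m, n)) v : vdot v (Y^T *m Y *m v) = vdot (Y *m v) (Y *m v).
Proof. by rewrite -mulmxA vdot_trmx trmxK. Qed.

Lemma vdotvv_ge0 n (u : 'cV[R]_n) : 0 <= vdot u u.
Proof. by rewrite vdotE; apply: sumr_ge0 => i _; rewrite -expr2 sqr_ge0. Qed.

Lemma vdotvv_eq0 n (u : 'cV[R]_n) : (vdot u u == 0) = (u == 0).
Proof.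
apply/idP/eqP => [|->]; last by rewrite vdot0l.
rewrite vdotE psumr_eq0 => [/allP uu0|i _]; last by rewrite -expr2 sqr_ge0.
apply/matrixP => i j; rewrite (ord1 j) mxE.
by have /implyP/(_ isT) := uu0 i (mem_index_enum i); rewrite mulf_eq0 orbb => /eqP.
Qed.

Lemma vdotvv_gt0 n (u : 'cV[R]_n) : (0 < vdot u u) = (u != 0).
Proof. by rewrite lt_def vdotvv_eq0 vdotvv_ge0 andbT. Qed.

Lemma vnormE n (u : 'cV[R]_n) : vnorm u = Num.sqrt (vdot u u).
Proof. by rewrite /vnorm vdotE; congr Num.sqrt; apply: eq_bigr => i _; rewrite expr2. Qed.

Lemma vnorm_ge0 n (u : 'cV[R]_n) : 0 <= vnorm u.
Proof. exact: sqrtr_ge0. Qed.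

Lemma sqr_vnormE n (u : 'cV[R]_n) : vnorm u ^+ 2 = \sum_i u i 0 ^+ 2.
Proof. by rewrite sqr_sqrtr //; apply: sumr_ge0 => i _; exact: sqr_ge0. Qed.

Lemma sqr_vnorm n (u : 'cV[R]_n) : vnorm u ^+ 2 = vdot u u.
Proof. by rewrite vnormE sqr_sqrtr ?vdotvv_ge0. Qed.

Lemma vnorm_gt0 n (u : 'cV[R]_n) : (0 < vnorm u) = (u != 0).
Proof. by rewrite vnormE sqrtr_gt0 vdotvv_gt0. Qed.

Lemma vnormZ n a (u : 'cV[R]_n) : vnorm (a *: u) = `|a| * vnorm u.
Proof. by rewrite !vnormE vdotZl vdotZr mulrA -expr2 sqrtrM ?sqr_ge0 // sqrtr_sqr. Qed.

Lemma vnormN n (u : 'cV[R]_n) : vnorm (- u) = vnorm u.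
Proof. by rewrite -scaleN1r vnormZ normrN1 mul1r. Qed.

Lemma vnorm_normalize n (v : 'cV[R]_n) : v != 0 -> vnorm ((vnorm v)^-1 *: v) = 1.
Proof.
rewrite -vnorm_gt0 => vp.
by rewrite vnormZ gtr0_norm ?invr_gt0 // mulVf ?gt_eqF.
Qed.

Lemma psd_cauchy_schwarz n (N : 'M[R]_n) (u v : 'cV[R]_n) :
  N^T = N -> (forall w, 0 <= vdot w (N *m w)) ->
  vdot u (N *m v) ^+ 2 <= vdot u (N *m u) * vdot v (N *m v).
Proof.
move=> Nsym Npsd.
set a := vdot u (N *m u); set b := vdot u (N *m v); set d := vdot v (N *m v).
have form x y : vdot (x *: u + y *: v) (N *m (x *: u + y *: v)) =
    x ^+ 2 * a + 2 * x * y * b + y ^+ 2 * d.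
  have vNu : vdot v (N *m u) = b by rewrite vdot_trmx Nsym vdotC.
  by rewrite !mulmxDr -!scalemxAr !vdotDl !vdotDr !vdotZl !vdotZr vNu -/a -/b -/d; ring.
(* The form at d u - b v and at - b u + a v is d (a d - b^2) and a (a d - b^2);
   when a = d = 0, its values at u + v and u - v force b = 0. *)
have := Npsd (d *: u + (- b) *: v); have := Npsd ((- b) *: u + a *: v).
have := Npsd (1 *: u + 1 *: v); have := Npsd (1 *: u + (-1) *: v).
rewrite !form => h1 h2 h3 h4.
have a_ge0 : 0 <= a by exact: Npsd.
have d_ge0 : 0 <= d by exact: Npsd.
have [d_eq0|d_neq0] := eqVneq d 0.
  have [a_eq0|a_neq0] := eqVneq a 0; first by rewrite d_eq0 a_eq0 in h3 h4 *; nra.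
  have a_gt0 : 0 < a by rewrite lt_def a_neq0.
  nra.
have d_gt0 : 0 < d by rewrite lt_def d_neq0.
nra.
Qed.

Lemma cauchy_schwarz n (u v : 'cV[R]_n) : vdot u v ^+ 2 <= vdot u u * vdot v v.
Proof.
have := @psd_cauchy_schwarz n 1%:M u v (trmx1 _ _).
by rewrite !mul1mx; apply=> w; rewrite mul1mx vdotvv_ge0.
Qed.

Lemma mulmx_vdot_row m n (Y : 'M[R]_(m, n)) v i : (Y *m v) i 0 = vdot (row i Y)^T v.
Proof. by rewrite /vdot trmxK -row_mul [RHS]mxE. Qed.

Lemma sqr_frob m n (Y : 'M[R]_(m, n)) :
  frob Y ^+ 2 = \sum_i vnorm (row i Y)^T ^+ 2.
Proof.
rewrite /frob sqr_sqrtr; last by do 2!(apply: sumr_ge0 => ? _); exact: sqr_ge0.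
by apply: eq_bigr => i _; rewrite sqr_vnormE; apply: eq_bigr => j _; rewrite !mxE.
Qed.

Lemma vdot_mulmx_le_frob m n (Y : 'M[R]_(m, n)) v :
  vdot (Y *m v) (Y *m v) <= frob Y ^+ 2 * vdot v v.
Proof.
rewrite sqr_frob mulr_suml vdotE; apply: ler_sum => i _.
by rewrite mulmx_vdot_row -expr2 sqr_vnorm cauchy_schwarz.
Qed.

Lemma mulmx_neq0 m n (Y : 'M[R]_(m, n)) : Y != 0 -> exists v : 'cV[R]_n, Y *m v != 0.
Proof.
move=> Ynz; apply: contrapT => /forallNP Y0; move/eqP: Ynz; apply.
apply/matrixP => i j; have /negP := Y0 (delta_mx j 0); rewrite negbK => /eqP.
by move/(congr1 (fun w : 'cV_m => w i 0)); rewrite -colE !mxE.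
Qed.

Lemma frob_neq0 m n (Y : 'M[R]_(m, n)) : Y != 0 -> frob Y != 0.
Proof.
move=> /mulmx_neq0 [v Yv]; apply: contra_neq Yv => Y0; apply/eqP.
rewrite -vdotvv_eq0 eq_le vdotvv_ge0 andbT.
by have := vdot_mulmx_le_frob Y v; rewrite Y0 expr0n mul0r.
Qed.

Section SpectralNorm.
Variables (m n : nat) (Y : 'M[R]_(m, n)).

Let unit_sphere_image := [set vnorm (Y *m x) | x in [set x : 'cV[R]_n | vnorm x = 1]]%classic.

Lemma unit_sphere_image_ubound : has_ubound unit_sphere_image.
Proof.
exists (frob Y) => _ [x /= x1 <-].
rewrite -ler_sqr ?nnegrE ?vnorm_ge0 ?sqrtr_ge0 // sqr_vnorm.
by have := vdot_mulmx_le_frob Y x; rewrite -[vdot x x]sqr_vnorm x1 expr1n mulr1.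
Qed.

Lemma specnorm_ge0 : 0 <= specnorm Y.
Proof.
have [S0|/set0P [y Sy]] := eqVneq unit_sphere_image set0.
  by rewrite /specnorm -/unit_sphere_image S0 sup0.
apply: le_trans (ub_le_sup unit_sphere_image_ubound Sy).
by case: Sy => x _ <-; exact: vnorm_ge0.
Qed.

Lemma vnorm_mulmx_le v : vnorm (Y *m v) <= specnorm Y * vnorm v.
Proof.
have [->|vnz] := eqVneq v 0; first by rewrite mulmx0 !vnormE !vdot0l sqrtr0 mulr0.
have vp : 0 < vnorm v by rewrite vnorm_gt0.
set u := (vnorm v)^-1 *: v.
have : unit_sphere_image (vnorm (Y *m u)) by exists u => //; exact: vnorm_normalize.
move/(ub_le_sup unit_sphere_image_ubound).
by rewrite -scalemxAr vnormZ gtr0_norm ?invr_gt0 // mulrC ler_pdivrMr.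
Qed.

Lemma vdot_mulmx_le v : vdot (Y *m v) (Y *m v) <= specnorm Y ^+ 2 * vdot v v.
Proof.
have Kv0 : 0 <= specnorm Y * vnorm v by rewrite mulr_ge0 ?specnorm_ge0 ?vnorm_ge0.
by rewrite -!sqr_vnorm -exprMn ler_sqr ?nnegrE ?vnorm_ge0 // vnorm_mulmx_le.
Qed.

Lemma sqr_specnorm_le B :
  (forall v, vdot (Y *m v) (Y *m v) <= B * vdot v v) -> 0 <= B -> specnorm Y ^+ 2 <= B.
Proof.
move=> YB B0; rewrite -(sqr_sqrtr B0) ler_sqr ?nnegrE ?specnorm_ge0 ?sqrtr_ge0 //.
have [S0|/set0P S0] := eqVneq unit_sphere_image set0.
  by rewrite /specnorm -/unit_sphere_image S0 sup0 sqrtr_ge0.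
apply: ge_sup => // _ [x x1 <-].
rewrite -ler_sqr ?nnegrE ?vnorm_ge0 ?sqrtr_ge0 // sqr_vnorm sqr_sqrtr //.
by have := YB x; rewrite -[vdot x x]sqr_vnorm x1 expr1n mulr1.
Qed.

Lemma specnorm_gt0 : Y != 0 -> 0 < specnorm Y.
Proof.
move=> /mulmx_neq0 [v Yv]; rewrite lt_def specnorm_ge0 andbT.
apply/eqP => Y0; move: (vnorm_mulmx_le v).
by rewrite Y0 mul0r leNgt vnorm_gt0 Yv.
Qed.

End SpectralNorm.

Lemma quad_form_le_specnorm n (N : 'M[R]_n) u : vdot u (N *m u) <= specnorm N * vdot u u.
Proof.
apply: le_trans (ler_norm _) _.
rewrite -ler_sqr ?nnegrE ?mulr_ge0 ?specnorm_ge0 ?vdotvv_ge0 // real_normK ?num_real //.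
apply: le_trans (cauchy_schwarz _ _) _.
by rewrite exprMn mulrC expr2 mulrA ler_wpM2r ?vdotvv_ge0 // vdot_mulmx_le.
Qed.

Lemma gram_unitmx m n (C : 'M[R]_(m, n)) : row_free C^T -> C^T *m C \in unitmx.
Proof.
move=> Cfree; rewrite -row_free_unit; apply: inj_row_free => w wCC.
have : vdot (C *m w^T) (C *m w^T) == 0.
  by rewrite /vdot trmx_mul trmxK mulmxA -(mulmxA w) wCC mul0mx mxE.
rewrite vdotvv_eq0 -[C *m _]trmxK trmx_mul trmxK trmx_eq0.
by rewrite mulmx_free_eq0 // => /eqP.
Qed.

Lemma penrose_mul m r n (C : 'M[R]_(m, r)) (D : 'M[R]_(r, n)) Ci Di :
  Ci *m C = 1%:M -> D *m Di = 1%:M ->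
  (C *m Ci)^T = C *m Ci -> (Di *m D)^T = Di *m D ->
  penrose (C *m D) (Di *m Ci).
Proof.
move=> CiC DDi Csym Dsym.
have AX : C *m D *m (Di *m Ci) = C *m Ci by rewrite !mulmxA -(mulmxA C) DDi mulmx1.
have XA : Di *m Ci *m (C *m D) = Di *m D by rewrite !mulmxA -(mulmxA Di) CiC mulmx1.
split; rewrite ?AX ?XA //.
- by rewrite -mulmxA (mulmxA Ci) CiC mul1mx.
- by rewrite -mulmxA (mulmxA D) DDi mul1mx.
Qed.

Lemma penrose_full_rank_factor m r n (C : 'M[R]_(m, r)) (D : 'M[R]_(r, n)) :
  row_free C^T -> row_free D -> exists X, penrose (C *m D) X.
Proof.
move=> Cfree Dfree; have CC := gram_unitmx Cfree.
have DD : D *m D^T \in unitmx by rewrite -{1}[D]trmxK gram_unitmx ?trmxK.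
have CCsym : (C^T *m C)^T = C^T *m C by rewrite trmx_mul trmxK.
have DDsym : (D *m D^T)^T = D *m D^T by rewrite trmx_mul trmxK.
exists (D^T *m invmx (D *m D^T) *m (invmx (C^T *m C) *m C^T)); apply: penrose_mul.
- by rewrite -mulmxA mulVmx.
- by rewrite mulmxA mulmxV.
- by rewrite !trmx_mul trmxK trmx_inv CCsym mulmxA.
- by rewrite !trmx_mul trmxK trmx_inv DDsym mulmxA.
Qed.

Lemma penrose_exists m n (A : 'M[R]_(m, n)) : exists X, penrose A X.
Proof.
rewrite -(mulmx_base A); apply: penrose_full_rank_factor (row_base_free A).
by rewrite /row_free mxrank_tr; exact: col_base_full.
Qed.

Lemma pinvP m n (A : 'M[R]_(m, n)) : penrose A (pinv A).
Proof. exact: xgetPex (penrose_exists A). Qed.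

Section OrthogonalProjection.
Variables (n : nat) (Q : 'M[R]_n).
Hypotheses (Qsym : Q^T = Q) (Qidem : Q *m Q = Q).

Lemma proj_vdot v : vdot v (Q *m v) = vdot (Q *m v) (Q *m v).
Proof. by rewrite -{1}Qidem -mulmxA vdot_trmx Qsym. Qed.

Lemma proj_vdot_le v : vdot (Q *m v) (Q *m v) <= vdot v v.
Proof.
have := vdotvv_ge0 (v - Q *m v).
by rewrite !vdotBl !vdotBr (vdotC (Q *m v) v) proj_vdot; lra.
Qed.

End OrthogonalProjection.

Lemma sym_eigenvalueP n (M : 'M[R]_n) a : M^T = M ->
  reflect (exists2 v : 'cV[R]_n, M *m v = a *: v & v != 0) (eigenvalue M a).
Proof.
move=> Msym; apply: (iffP eigenvalueP) => [[w wM w0]|[v Mv v0]].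
  by exists w^T; rewrite ?trmx_eq0 // -{1}Msym -trmx_mul wM linearZ.
by exists v^T; rewrite ?trmx_eq0 // -{1}Msym -trmx_mul Mv linearZ.
Qed.

Lemma psd_unitmx_coercive n (N : 'M[R]_n) :
  N^T = N -> (forall v, 0 <= vdot v (N *m v)) -> N \in unitmx ->
  exists2 d, 0 < d & forall v, d * vdot v v <= vdot v (N *m v).
Proof.
move=> Nsym Npsd Nunit.
set K := specnorm N; set K' := specnorm (invmx N).
have T_ge0 : 0 <= K' ^+ 2 * K by rewrite mulr_ge0 ?exprn_ge0 ?specnorm_ge0.
exists (K' ^+ 2 * K + 1)^-1 => [|v]; first by rewrite invr_gt0 ltr_wpDl.
rewrite mulrC ler_pdivrMr ?ltr_wpDl //; set u := N *m v.
have vv_le : vdot v v <= K' ^+ 2 * vdot u u.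
  by have := vdot_mulmx_le (invmx N) u; rewrite mulKmx.
have uu_le : vdot u u <= K * vdot v (N *m v).
  have [->|uu_gt0] := eqVneq (vdot u u) 0; first by rewrite mulr_ge0 ?specnorm_ge0.
  have {}uu_gt0 : 0 < vdot u u by rewrite lt_def uu_gt0 vdotvv_ge0.
  rewrite -(ler_pM2r uu_gt0) -expr2 mulrAC mulrC.
  have := psd_cauchy_schwarz v u Nsym Npsd; rewrite vdot_trmx Nsym => /le_trans; apply.
  by apply: ler_wpM2l; [exact: Npsd | exact: quad_form_le_specnorm].
have := Npsd v; have := ler_wpM2l (exprn_ge0 2 (specnorm_ge0 (invmx N))) uu_le.
rewrite -/K'; nra.
Qed.

End MatrixNorms.

Section RandomizedKaczmarz.
Variables (R : realType) (m n : nat) (At : 'M[R]_(m, n)) (bt : 'cV[R]_m).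
Implicit Types (x z : 'cV[R]_n) (i : 'I_m).

Lemma rk_expect_sqdist0 x z : rk_expect_sqdist At bt x z 0 = vnorm (x - z) ^+ 2.
Proof.
rewrite /rk_expect_sqdist (big_pred1 [tuple]) => [|t]; first by rewrite big_nil mul1r.
by rewrite (tuple0 t) /=; apply/esym/eqP.
Qed.

Lemma rk_expect_sqdistS x z k :
  rk_expect_sqdist At bt x z k.+1 =
  \sum_i rk_prob At i * rk_expect_sqdist At bt (rk_step At bt x i) z k.
Proof.
rewrite /rk_expect_sqdist (reindex (fun p : 'I_m * k.-tuple 'I_m => cons_tuple p.1 p.2)).
  rewrite -(pair_big xpredT xpredT (fun i (s : k.-tuple 'I_m) =>
    (\prod_(j <- cons_tuple i s) rk_prob At j) *
    vnorm (rk_iter At bt x (cons_tuple i s) - z) ^+ 2)) /=.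
  apply: eq_bigr => i _; rewrite mulr_sumr; apply: eq_bigr => s _.
  by rewrite big_cons mulrA.
exists (fun t => (thead t, behead_tuple t)).
  by move=> [i s] _ /=; congr pair; apply: val_inj.
by move=> t _ /=; rewrite [RHS]tuple_eta; apply: val_inj.
Qed.

Lemma rk_prob_ge0 i : 0 <= rk_prob At i.
Proof. by rewrite /rk_prob divr_ge0 ?sqr_ge0. Qed.

Lemma sum_rk_prob : frob At != 0 -> \sum_i rk_prob At i = 1.
Proof.
by move=> At0; rewrite /rk_prob -mulr_suml -sqr_frob mulfV ?expf_neq0.
Qed.

Lemma rk_step_residual x z i :
  (row i At *m x) 0 0 - bt i 0 = vdot (row i At)^T (x - z) - (bt - At *m z) i 0.
Proof. by rewrite vdotBr -!mulmx_vdot_row -row_mul !mxE; ring. Qed.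

Lemma rk_step_sqdist x z i : row i At != 0 ->
  vnorm (row i At)^T ^+ 2 * vnorm (rk_step At bt x i - z) ^+ 2 =
  vnorm (row i At)^T ^+ 2 * vnorm (x - z) ^+ 2
  + (bt - At *m z) i 0 ^+ 2 - (At *m (x - z)) i 0 ^+ 2.
Proof.
move=> rowi; rewrite /rk_step (rk_step_residual _ z) mulmx_vdot_row !sqr_vnorm.
set a := (row i At)^T; set e := x - z; set r := (bt - At *m z) i 0.
have aa0 : vdot a a != 0 by rewrite vdotvv_eq0 trmx_eq0.
rewrite addrAC -/e !vdotBl !vdotBr !vdotZl !vdotZr (vdotC x a) (vdotC z a) (vdotC z x).
by field.
Qed.

Lemma expect_rk_step_sqdist x z : (forall i, row i At != 0) -> frob At != 0 ->
  \sum_i rk_prob At i * vnorm (rk_step At bt x i - z) ^+ 2 =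
  vnorm (x - z) ^+ 2
  + (vnorm (bt - At *m z) ^+ 2 - vnorm (At *m (x - z)) ^+ 2) / frob At ^+ 2.
Proof.
move=> rows0 At0; rewrite /rk_prob.
under eq_bigr do rewrite mulrAC rk_step_sqdist //.
rewrite -mulr_suml sumrB big_split /= -mulr_suml -sqr_frob -!sqr_vnormE.
by field.
Qed.

Lemma rk_rate_ge0 (c : R) : At != 0 ->
  (forall y, c * vnorm (At^T *m y) ^+ 2 <= vnorm (At *m (At^T *m y)) ^+ 2) ->
  0 <= 1 - c / frob At ^+ 2.
Proof.
move=> At0 c_range; have AtT0 : At^T != 0 by rewrite trmx_eq0.
have [y Ty] := mulmx_neq0 AtT0.
rewrite subr_ge0 ler_pdivrMr ?exprn_gt0 ?lt_def ?frob_neq0 ?sqrtr_ge0 // mul1r.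
have := c_range y; rewrite !sqr_vnorm => /le_trans/(_ (vdot_mulmx_le_frob At _)).
by rewrite ler_pM2r ?vdotvv_gt0.
Qed.

Lemma rk_expect_sqdist_le z (c : R) : (forall i, row i At != 0) -> At != 0 -> 0 < c ->
  (forall y, c * vnorm (At^T *m y) ^+ 2 <= vnorm (At *m (At^T *m y)) ^+ 2) ->
  forall k x y, x - z = At^T *m y ->
  rk_expect_sqdist At bt x z k <=
    (1 - c / frob At ^+ 2) ^+ k * vnorm (x - z) ^+ 2
    + vnorm (bt - At *m z) ^+ 2 * (1 - (1 - c / frob At ^+ 2) ^+ k) / c.
Proof.
move=> rows0 At0 c_gt0 c_range.
set F2 := frob At ^+ 2; set q := 1 - c / F2; set r2 := vnorm (bt - At *m z) ^+ 2.
have F2_gt0 : 0 < F2 by rewrite exprn_gt0 // lt_def frob_neq0 // sqrtr_ge0.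
have q_ge0 : 0 <= q by exact: rk_rate_ge0.
elim=> [|k IHk] x y exy; first by rewrite rk_expect_sqdist0 expr0 mul1r subrr mulr0 mul0r addr0.
rewrite rk_expect_sqdistS.
have step_range i : exists y', rk_step At bt x i - z = At^T *m y'.
  exists (y - (((row i At *m x) 0 0 - bt i 0) / vnorm (row i At)^T ^+ 2) *: delta_mx i 0).
  by rewrite /rk_step mulmxBr -scalemxAr rowE trmx_mul trmx_delta -exy addrAC.
apply: le_trans (_ : \sum_i rk_prob At i *
    (q ^+ k * vnorm (rk_step At bt x i - z) ^+ 2 + r2 * (1 - q ^+ k) / c) <= _).
  apply: ler_sum => i _; apply: ler_wpM2l; first exact: rk_prob_ge0.
  by have [y' ey'] := step_range i; exact: IHk ey'.
under eq_bigr do rewrite mulrDr mulrCA.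
rewrite big_split /= -mulr_sumr -mulr_suml sum_rk_prob ?frob_neq0 // mul1r.
rewrite expect_rk_step_sqdist ?frob_neq0 //.
have := c_range y; rewrite -exy.
set e2 := vnorm (x - z) ^+ 2; set Ae2 := vnorm (At *m (x - z)) ^+ 2 => ce2.
rewrite -subr_ge0 (_ : _ - _ = q ^+ k * (Ae2 - c * e2) / F2).
  apply: divr_ge0 (ltW F2_gt0); apply: mulr_ge0 (exprn_ge0 _ q_ge0) _.
  by rewrite subr_ge0.
by rewrite /q exprS -/r2 -/F2; field; rewrite !gt_eqF.
Qed.

End RandomizedKaczmarz.

Section PseudoinverseSpectrum.
Variables (R : realType) (m n : nat) (At : 'M[R]_(m, n)).
Hypothesis At0 : At != 0.

Local Notation X := (pinv At).
Local Notation P := (pinv At *m At).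
Local Notation M := (At^T *m At).
Local Notation L := (specnorm (pinv At)).

Let AXA : At *m X *m At = At. Proof. by case: (pinvP At). Qed.
Let XAX : X *m At *m X = X. Proof. by case: (pinvP At). Qed.
Let AX_sym : (At *m X)^T = At *m X. Proof. by case: (pinvP At). Qed.
Let P_sym : P^T = P. Proof. by case: (pinvP At). Qed.
Let AX_idem : At *m X *m (At *m X) = At *m X. Proof. by rewrite mulmxA AXA. Qed.
Let P_idem : P *m P = P. Proof. by rewrite mulmxA XAX. Qed.
Let M_sym : M^T = M. Proof. by rewrite trmx_mul trmxK. Qed.
Let PM : P *m M = M.
Proof. by rewrite mulmxA -{1}P_sym -trmx_mul mulmxA AXA. Qed.

Lemma specnorm_pinv_gt0 : 0 < L.
Proof. by apply: specnorm_gt0; apply: contraNneq At0 => X0; rewrite -AXA X0 mulmx0 mul0mx. Qed.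

Lemma pinv_range_bound e : P *m e = e -> vdot e e <= L ^+ 2 * vdot (At *m e) (At *m e).
Proof. by move=> Pe; have := vdot_mulmx_le X (At *m e); rewrite mulmxA Pe. Qed.

Lemma pinv_trmx_range_bound y :
  L^-1 ^+ 2 * vnorm (At^T *m y) ^+ 2 <= vnorm (At *m (At^T *m y)) ^+ 2.
Proof.
have Pe : P *m (At^T *m y) = At^T *m y.
  by rewrite mulmxA -{1}P_sym -trmx_mul mulmxA AXA.
rewrite !sqr_vnorm exprVn mulrC ler_pdivrMr ?exprn_gt0 ?specnorm_pinv_gt0 // mulrC.
exact: pinv_range_bound.
Qed.

Lemma pinv_eigenvalue_lb s : 0 < s -> eigenvalue M (s ^+ 2) -> L^-1 <= s.
Proof.
move=> s_gt0 /(sym_eigenvalueP _ M_sym) [e Me e0].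
have Pe : P *m e = e.
  have -> : e = (s ^+ 2)^-1 *: (M *m e) by rewrite Me scalerA mulVf ?scale1r ?expf_neq0 ?gt_eqF.
  by rewrite -scalemxAr mulmxA PM.
have := pinv_range_bound Pe; rewrite -vdot_gram Me vdotZr mulrA.
have Ls_ge0 : 0 <= L * s := mulr_ge0 (specnorm_ge0 _) (ltW s_gt0).
rewrite -{1}[vdot e e]mul1r ler_pM2r ?vdotvv_gt0 // -exprMn -[1](expr1n _ 2).
rewrite ler_sqr ?nnegrE // => Ls1.
by rewrite -[L^-1]mulr1 ler_pdivrMl ?specnorm_pinv_gt0.
Qed.

Let c := L^-1 ^+ 2.
Let N : 'M[R]_n := M - c *: P + (1%:M - P).

Let c_gt0 : 0 < c. Proof. by rewrite exprn_gt0 ?invr_gt0 ?specnorm_pinv_gt0. Qed.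

Let cL : c * L ^+ 2 = 1.
Proof. by rewrite /c exprVn mulVf ?expf_neq0 ?gt_eqF ?specnorm_pinv_gt0. Qed.

Let N_sym : N^T = N.
Proof. by rewrite /N !linearD /= !linearN /= linearZ /= trmx1 P_sym M_sym. Qed.

Let vdotN v : vdot v (N *m v) =
  vdot (At *m v) (At *m v) - c * vdot (P *m v) (P *m v) + (vdot v v - vdot (P *m v) (P *m v)).
Proof.
rewrite /N !mulmxDl !mulNmx -scalemxAl mul1mx !vdotDr !vdotNr vdotZr.
by rewrite vdot_gram (proj_vdot P_sym P_idem).
Qed.

Let N_psd v : 0 <= vdot v (N *m v).
Proof.
rewrite vdotN addr_ge0 ?subr_ge0 ?proj_vdot_le //.
have /pinv_range_bound : P *m (P *m v) = P *m v by rewrite mulmxA P_idem.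
rewrite !mulmxA AXA => PvAv.
by apply: le_trans (ler_wpM2l (ltW c_gt0) PvAv) _; rewrite mulrA cL mul1r.
Qed.

Let N_ker (v : 'cV[R]_n) : N *m v = 0 -> M *m v = c *: v.
Proof.
move=> Nv0.
have PN : P *m N = M - c *: P.
  by rewrite /N !mulmxDr !mulmxN -scalemxAr PM P_idem mulmx1 subrr addr0.
have Mv : M *m v = c *: (P *m v).
  apply/eqP; rewrite -subr_eq0 scalemxAl -mulmxBl -PN.
  by rewrite -[P *m N *m v]mulmxA Nv0 mulmx0.
move: Nv0; rewrite /N !mulmxDl !mulNmx -scalemxAl mul1mx Mv subrr add0r.
by move/eqP; rewrite subr_eq0 => /eqP <-.
Qed.

Lemma pinv_eigenvalue : eigenvalue M (L^-1 ^+ 2).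
Proof.
apply/(sym_eigenvalueP _ M_sym); have [Nunit|Nsing] := boolP (N \in unitmx); last first.
  have /det0P [w w0 wN] : \det N == 0 by move: Nsing; rewrite unitmxE unitfE negbK.
  exists w^T; last by rewrite trmx_eq0.
  by apply: N_ker; rewrite -N_sym -trmx_mul wN trmx0.
have [d d_gt0 Nd] := psd_unitmx_coercive N_sym N_psd Nunit.
have cd_gt0 : 0 < c + d by rewrite addr_gt0.
have X_bound w : vdot (X *m w) (X *m w) <= (c + d)^-1 * vdot w w.
  set e := X *m w; have Pe : P *m e = e by rewrite /e mulmxA XAX.
  have AXw : vdot (At *m e) (At *m e) <= vdot w w.
    by rewrite /e mulmxA (proj_vdot_le AX_sym AX_idem).
  have := Nd e; rewrite vdotN Pe subrr addr0 => eNe.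
  by rewrite mulrC ler_pdivlMr // mulrDr; lra.
have cdV_ge0 : 0 <= (c + d)^-1 by rewrite invr_ge0; exact: ltW.
have := sqr_specnorm_le X_bound cdV_ge0.
rewrite -[(c + d)^-1]mulr1 ler_pdivlMl // mulrDl cL.
have := mulr_gt0 d_gt0 (exprn_gt0 2 specnorm_pinv_gt0); lra.
Qed.

Lemma sigma_min_pinv : sigma_min At = L^-1.
Proof.
have L_in : 0 < L^-1 /\ eigenvalue M (L^-1 ^+ 2).
  by split; [rewrite invr_gt0 specnorm_pinv_gt0 | exact: pinv_eigenvalue].
apply/eqP; rewrite eq_le; apply/andP; split.
  by apply: ge_inf L_in; exists 0 => s [s_gt0 _]; exact: ltW.
apply: lb_le_inf; first by exists L^-1.
by move=> s [s_gt0 /(pinv_eigenvalue_lb s_gt0)].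
Qed.

End PseudoinverseSpectrum.

Unset Implicit Arguments.

Theorem corollary3p4 (R : realType) (m n : nat)
  (A : 'M[R]_(m, n)) (E : 'M[R]_m) (F : 'M[R]_n) (b eps : 'cV[R]_m)
  (x0 : 'cV[R]_n) :
  (1%:M + E) \in unitmx ->
  (1%:M + F) \in unitmx ->
  let At := (1%:M + E) *m A *m (1%:M + F) in
  let dA := E *m A + A *m F + E *m A *m F in
  let bt := b + eps in
  (forall i : 'I_m, row i At != 0) ->
  (exists x : 'cV[R]_n, A *m x = b) ->
  let xLS := pinv A *m b in
  (exists y : 'cV[R]_m, x0 - xLS = At^T *m y) ->
  let Rt := (specnorm (pinv At)) ^+ 2 * (frob At) ^+ 2 in
  forall k : nat,
    rk_expect_sqdist At bt x0 xLS k <=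
      (1 - Rt^-1) ^+ k * (vnorm (x0 - xLS)) ^+ 2
      + (vnorm (dA *m xLS - eps)) ^+ 2 / (sigma_min At) ^+ 2.
Proof.
move=> _ _ At dA bt rows0 [x Ax] xLS [y exy] Rt k.
have [At0|At0] := eqVneq At 0.
  have e0 : vnorm (x0 - xLS) = 0 by rewrite exy At0 trmx0 mul0mx !vnormE vdot0l sqrtr0.
  rewrite e0 expr0n mulr0 add0r; case: k => [|k].
    by rewrite rk_expect_sqdist0 e0 expr0n divr_ge0 ?sqr_ge0.
  rewrite rk_expect_sqdistS big1 ?divr_ge0 ?sqr_ge0 // => i _.
  by move: (rows0 i); rewrite At0 row0 eqxx.
set L := specnorm (pinv At); set c := L^-1 ^+ 2.
have c_gt0 : 0 < c by rewrite exprn_gt0 // invr_gt0 specnorm_pinv_gt0.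
have c_range := pinv_trmx_range_bound At0.
have q_ge0 := rk_rate_ge0 At0 c_range.
apply: le_trans (rk_expect_sqdist_le bt rows0 At0 c_gt0 c_range k exy) _.
have rate : 1 - c / frob At ^+ 2 = 1 - Rt^-1.
  by rewrite /Rt (invfM (L ^+ 2)) /c exprVn.
rewrite rate in q_ge0 *; rewrite lerD2l.
have Ab : A *m xLS = b by rewrite /xLS -Ax !mulmxA; case: (pinvP A) => ->.
have AtE : At = A + dA.
  by rewrite /At /dA !mulmxDl !mulmxDr !mul1mx !mulmx1 -!addrA; congr (_ + _); rewrite addrCA.
have -> : bt - At *m xLS = - (dA *m xLS - eps).
  by rewrite AtE mulmxDl Ab /bt opprB opprD addrACA subrr add0r.
rewrite vnormN sigma_min_pinv // -/L -/c.
apply: ler_wpM2r; first by rewrite invr_ge0; exact: ltW.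
by rewrite ler_piMr ?sqr_ge0 // gerBl exprn_ge0.
Qed.
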